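(* Let $\mathfrak{h}=\mathfrak{b}\oplus\mathfrak{c}\oplus\mathfrak{r}\oplus\mathfrak{z}$ be an orthogonal direct sum with $\mathfrak{b}$ a subspace of $\mathfrak{a}$, $\mathfrak{c}$ a complex subspace of $\mathfrak{g}_\alpha$, $\mathfrak{r}$ a totally real subspace of $\mathfrak{g}_\alpha$, and $\mathfrak{z}$ a subspace of $\mathfrak{g}_{2\alpha}$ with $[\mathfrak{c},\mathfrak{c}]\subset\mathfrak{z}$. Let $H$ be the connected Lie subgroup of $AN$ with Lie algebra $\mathfrak{h}$. Then each orbit of $H$ on $\mathbb{C}H^n$ can be written as $H\cdot\operatorname{Exp}(X)(o)$ for some $X\in(\mathfrak{a}\oplus\mathfrak{n})\ominus\mathfrak{h}$.
   Context: $\mathbb{C}H^n$ is the complex hyperbolic space of constant holomorphic sectional curvature $-1$; $G=SU(1,n)$, $o\in\mathbb{C}H^n$ fixed with stabilizer $K$, Cartan decomposition $\mathfrak{g}=\mathfrak{k}\oplus\mathfrak{p}$, $\mathfrak{a}\subset\mathfrak{p}$ maximal abelian ($1$-dimensional), restricted roots $\pm\alpha,\pm2\alpha$ with $\alpha,2\alpha$ positive, root spaces $\mathfrak{g}_\lambda$, $\mathfrak{n}=\mathfrak{g}_\alpha\oplus\mathfrak{g}_{2\alpha}$, and $AN$ the connected subgroup with Lie algebra $\mathfrak{a}\oplus\mathfrak{n}$, which acts simply transitively on $\mathbb{C}H^n$. $\mathfrak{a}\oplus\mathfrak{n}$ carries an inner product and complex structure $J$ (with $J\mathfrak{g}_\alpha=\mathfrak{g}_\alpha$,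 $J\mathfrak{a}=\mathfrak{g}_{2\alpha}$) making $AN$ with its left-invariant metric holomorphically isometric to $\mathbb{C}H^n$. The bracket on $\mathfrak{g}_\alpha$ is $[U,V]=\langle JU,V\rangle Z$ with $Z\in\mathfrak{g}_{2\alpha}$. $\operatorname{Exp}$ is the Lie exponential of $AN$; $\ominus$ is orthogonal complement. A subspace $W$ is complex if $JW\subset W$, totally real if $JW\perp W$. *)

From HB Require Import structures.
From mathcomp Require Import all_boot all_order all_algebra.
From mathcomp Require Import all_classical all_reals all_analysis.
Set Implicit Arguments. Unset Strict Implicit. Unset Printing Implicit Defensive.
Import Order.TTheory GRing.Theory Num.Theory.
Local Open Scope ring_scope.

(* Concrete model of the solvable part AN of SU(1,n), m = n - 1.
   g_alpha = C^m, realized as pairs (x, y) of real row vectors (x + i y).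
   The Lie algebra a + n = R A + g_alpha + R Z is encoded as ((a, U), x)
   meaning a A + U + x Z. *)
Definition Vt (R : realType) (m : nat) := ('rV[R]_m * 'rV[R]_m)%type.
Definition Lie (R : realType) (m : nat) := ((R^o * Vt R m) * R^o)%type.

Definition aco (R : realType) (m : nat) (X : Lie R m) : R := X.1.1.
Definition vco (R : realType) (m : nat) (X : Lie R m) : Vt R m := X.1.2.
Definition zco (R : realType) (m : nat) (X : Lie R m) : R := X.2.

Definition dotr (R : realType) (m : nat) (u v : 'rV[R]_m) : R := \sum_(i < m) u 0 i * v 0 i.
Definition dotV (R : realType) (m : nat) (p q : Vt R m) : R := dotr p.1 q.1 + dotr p.2 q.2.
Definition JV (R : realType) (m : nat) (p : Vt R m) : Vt R m := (- p.2, p.1).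
Definition scaleV (R : realType) (m : nat) (s : R) (p : Vt R m) : Vt R m := (s *: p.1, s *: p.2).
Definition addV (R : realType) (m : nat) (p q : Vt R m) : Vt R m := (p.1 + q.1, p.2 + q.2).

Definition inner (R : realType) (m : nat) (X Y : Lie R m) : R :=
  aco X * aco Y + dotV (vco X) (vco Y) + zco X * zco Y.

Definition Jmap (R : realType) (m : nat) (X : Lie R m) : Lie R m :=
  ((- zco X : R^o, JV (vco X)), aco X : R^o).

(* [U, V] = <J U, V> Z on g_alpha *)
Definition omega (R : realType) (m : nat) (U W : Vt R m) : R := dotV (JV U) W.

Definition lieb (R : realType) (m : nat) (X Y : Lie R m) : Lie R m :=
  ((0 : R^o, addV (scaleV (aco X / 2) (vco Y)) (scaleV (- (aco Y / 2)) (vco X))),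
   (aco X * zco Y - aco Y * zco X + omega (vco X) (vco Y) : R^o)).

(* The group AN: (t, v, y) stands for Exp_N(v + y Z) Exp(t A). *)
Definition Grp (R : realType) (m : nat) := (R * (Vt R m * R))%type.

Definition gone (R : realType) (m : nat) : Grp R m := (0, ((0, 0), 0)).

Definition gmul (R : realType) (m : nat) (g g' : Grp R m) : Grp R m :=
  let: (t, (v, y)) := g in
  let: (t', (v', y')) := g' in
  (t + t',
   (addV v (scaleV (expR (t / 2)) v'),
    y + expR t * y' + omega v (scaleV (expR (t / 2)) v') / 2)).

Definition psi (R : realType) (a : R) : R :=
  if a == 0 then 1 else (expR a - 1) / a.

(* Lie exponential of AN (solution of the left-invariant ODE, written out):
   Exp(tA + U + xZ) = (t, psi(t/2) U, psi(t) x). *)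
Definition Exp (R : realType) (m : nat) (X : Lie R m) : Grp R m :=
  (aco X, (scaleV (psi (aco X / 2)) (vco X), psi (aco X) * zco X)).

(* connected Lie subgroup with Lie algebra h = subgroup generated by Exp(h) *)
Definition inH (R : realType) (m : nat) (h : {vspace Lie R m}) (g : Grp R m) : Prop :=
  exists s : seq (Lie R m),
    all (fun X => X \in h) s /\ g = foldr (@gmul R m) (gone R m) (map (@Exp R m) s).

From HB Require Import structures.
From mathcomp Require Import all_boot all_order all_algebra.
From mathcomp Require Import all_classical all_reals all_analysis.
From mathcomp Require Import ring lra.
Import Order.TTheory GRing.Theory Num.Theory.
Set Implicit Arguments. Unset Strict Implicit. Unset Printing Implicit Defensive.
Local Open Scope ring_scope.

(* Left translation by Exp Y acts on the coordinates (t, v, y) of AN affinely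
   in the component of Y: by aco Y on t; by vco Y on v when aco Y = 0 (then y
   moves as well); by zco Y on y alone when Y lies in g_2alpha.  Translating
   successively by elements of b, of c + r and of z, each chosen as minus the
   orthogonal projection of the current coordinates, reaches a point of the
   orbit whose coordinates are orthogonal to h, since each step fixes the
   coordinates treated before.  That point is Exp X, where X differs from the
   coordinates by the nonzero factors psi on each root space, so X is
   orthogonal to h as well. *)

Section OrthogonalProjection.

Variables (F : fieldType) (V : vectType F) (form : V -> V -> F).
Hypotheses (formDl : forall x x' y, form (x + x') y = form x y + form x' y)
           (formZl : forall k x y, form (k *: x) y = k * form x y)
           (formC : forall x y, form x y = form y x)
           (form_anisotropic : forall x, form x x = 0 -> x = 0).

Let formBl x x' y : form (x - x') y = form x y - form x' y.
Proof. by rewrite formDl -scaleN1r formZl mulN1r. Qed.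

Let formDr x y y' : form x (y + y') = form x y + form x y'.
Proof. by rewrite !(formC x) formDl. Qed.

Let formZr k x y : form x (k *: y) = k * form x y.
Proof. by rewrite !(formC x) formZl. Qed.

Let form0r x : form x 0 = 0.
Proof. by rewrite -(scale0r 0) formZr mul0r. Qed.

Lemma orthogonal_projection_span (s : seq V) (x : V) :
  exists2 u, u \in span s & {in span s, forall y, form (x - u) y = 0}.
Proof.
elim: s x => [|e s IHs] x.
  exists 0; first exact: mem0v.
  by move=> y; rewrite span_nil memv0 => /eqP ->.
have [w sw perp_w] := IHs e; have [u su perp_u] := IHs x.
set f := e - w in perp_w *; set k := form (x - u) f / form f f.
have coef_k : form (x - u) f = k * form f f.
  have [ff0|ffN0] := eqVneq (form f f) 0; last by rewrite divfK.
  by rewrite ff0 mulr0 (form_anisotropic ff0).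
have sub_s : (span s <= span (e :: s))%VS by rewrite span_cons addvSr.
exists (u + k *: f).
  have [su' sw'] : u \in span (e :: s) /\ w \in span (e :: s).
    by split; apply: (subvP sub_s).
  by rewrite rpredD // rpredZ // rpredB // memv_span ?mem_head.
move=> y; rewrite span_cons => /memv_addP [_ /vlineP [l ->] [y' sy' ->]].
have -> : l *: e + y' = l *: f + (l *: w + y') by rewrite scalerBr addrA subrK.
have sy'' : l *: w + y' \in span s by rewrite rpredD // rpredZ.
rewrite opprD addrA formDr !(formBl (x - u)) !formZl !formZr (perp_u _ sy'') (perp_w _ sy'') coef_k.
by rewrite mulr0 subrr addr0 mulrCA subrr.
Qed.

Lemma orthogonal_projection (W : {vspace V}) (x : V) :
  exists2 u, u \in W & {in W, forall y, form (x - u) y = 0}.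
Proof. by rewrite -(span_basis (vbasisP W)); exact: orthogonal_projection_span. Qed.

End OrthogonalProjection.

Section SolvableGroupAN.

Variables (R : realType) (m : nat).
Implicit Types (u w : 'rV[R]_m) (p q : Vt R m) (X Y : Lie R m) (g : Grp R m).

Lemma dotrC u w : dotr u w = dotr w u.
Proof. by apply: eq_bigr => i _; rewrite mulrC. Qed.

Lemma dotrDl u u' w : dotr (u + u') w = dotr u w + dotr u' w.
Proof. by rewrite /dotr -big_split; apply: eq_bigr => i _; rewrite mxE mulrDl. Qed.

Lemma dotrZl k u w : dotr (k *: u) w = k * dotr u w.
Proof. by rewrite /dotr mulr_sumr; apply: eq_bigr => i _; rewrite mxE mulrA. Qed.

Lemma dotr0l w : dotr 0 w = 0.
Proof. by rewrite -(scale0r 0) dotrZl mul0r. Qed.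

Lemma dotr_ge0 u : 0 <= dotr u u.
Proof. by apply: sumr_ge0 => i _; rewrite -expr2 sqr_ge0. Qed.

Lemma dotr_eq0 u : dotr u u = 0 -> u = 0.
Proof.
move=> /eqP; rewrite psumr_eq0 => [/allP u0|i _]; last by rewrite -expr2 sqr_ge0.
apply/rowP => i; have /implyP := u0 i (mem_index_enum i).
by rewrite mxE mulf_eq0 orbb => /(_ isT)/eqP.
Qed.

Lemma dotV0r p : dotV p (0, 0) = 0.
Proof. by rewrite /dotV !(dotrC p.1, dotrC p.2) !dotr0l addr0. Qed.

Lemma dotVZl k p q : dotV (k *: p) q = k * dotV p q.
Proof. by rewrite /dotV !dotrZl mulrDr. Qed.

Lemma omegaE p q : omega p q = dotr p.1 q.2 - dotr p.2 q.1.
Proof. by rewrite /omega /dotV /= -scaleN1r dotrZl mulN1r addrC. Qed.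

Lemma omegaDl p p' q : omega (p + p') q = omega p q + omega p' q.
Proof. rewrite !omegaE !dotrDl; ring. Qed.

Lemma omegaDr p q q' : omega p (q + q') = omega p q + omega p q'.
Proof. rewrite !omegaE !(dotrC p.1, dotrC p.2) !dotrDl; ring. Qed.

Lemma omegaZl k p q : omega (k *: p) q = k * omega p q.
Proof. rewrite !omegaE !dotrZl; ring. Qed.

Lemma omegaZr k p q : omega p (k *: q) = k * omega p q.
Proof. rewrite !omegaE !(dotrC p.1, dotrC p.2) !dotrZl; ring. Qed.

Lemma omega0l q : omega 0 q = 0.
Proof. by rewrite -(scale0r 0) omegaZl mul0r. Qed.

Lemma omega0r p : omega p 0 = 0.
Proof. by rewrite -(scale0r 0) omegaZr mul0r. Qed.

Lemma omegapp p : omega p p = 0.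
Proof. by rewrite omegaE dotrC subrr. Qed.

Lemma innerC X Y : inner X Y = inner Y X.
Proof.
by rewrite /inner /dotV (dotrC X.1.2.1) (dotrC X.1.2.2) (mulrC (aco X)) (mulrC (zco X)).
Qed.

Lemma innerDl X X' Y : inner (X + X') Y = inner X Y + inner X' Y.
Proof.
rewrite /inner /dotV /aco /vco /zco /= !dotrDl.
case: X X' Y => [[a v] x] [[a' v'] x'] [[b w] y] /=.
move: (a : R) (a' : R) (b : R) (x : R) (x' : R) (y : R) => {}a {}a' {}b {}x {}x' {}y.
ring.
Qed.

Lemma innerDr X Y Y' : inner X (Y + Y') = inner X Y + inner X Y'.
Proof. by rewrite !(innerC X) innerDl. Qed.

Lemma innerZl k X Y : inner (k *: X) Y = k * inner X Y.
Proof.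
rewrite /inner /dotV /aco /vco /zco /= !dotrZl.
case: X Y => [[a v] x] [[b w] y] /=.
move: (a : R) (b : R) (x : R) (y : R) => {}a {}b {}x {}y.
rewrite /GRing.scale /=; ring.
Qed.

Lemma inner_anisotropic X : inner X X = 0 -> X = 0.
Proof.
case: X => [[a [u1 u2]] x]; rewrite /inner /dotV /aco /vco /zco /= => XX0.
move: (a : R) (x : R) XX0 => {}a {}x XX0.
have u1_ge0 := dotr_ge0 u1; have u2_ge0 := dotr_ge0 u2.
have a0 : a = 0 by nra.
have x0 : x = 0 by nra.
have u1_0 : dotr u1 u1 = 0 by nra.
have u2_0 : dotr u2 u2 = 0 by nra.
by rewrite a0 x0 (dotr_eq0 u1_0) (dotr_eq0 u2_0).
Qed.

Definition in_a X := vco X = (0, 0) /\ zco X = 0.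
Definition in_galpha X := aco X = 0 /\ zco X = 0.
Definition in_g2alpha X := aco X = 0 /\ vco X = (0, 0).

Lemma inner_a X Y : in_a Y -> inner X Y = aco X * aco Y.
Proof. by case=> vY zY; rewrite /inner vY zY dotV0r mulr0 !addr0. Qed.

Lemma inner_galpha X Y : in_galpha Y -> inner X Y = dotV (vco X) (vco Y).
Proof. by case=> aY zY; rewrite /inner aY zY !mulr0 add0r addr0. Qed.

Lemma inner_g2alpha X Y : in_g2alpha Y -> inner X Y = zco X * zco Y.
Proof. by case=> aY vY; rewrite /inner aY vY dotV0r mulr0 !add0r. Qed.

Lemma in_galpha_addv (c r : {vspace Lie R m}) :
  {in c, forall X, in_galpha X} -> {in r, forall X, in_galpha X} ->
  {in (c + r)%VS, forall X, in_galpha X}.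
Proof.
move=> Hc Hr _ /memv_addP [X cX [Y rY ->]].
have [aX zX] := Hc X cX; have [aY zY] := Hr Y rY.
have -> : in_galpha (X + Y) = (aco X + aco Y = 0 /\ zco X + zco Y = 0) by [].
by rewrite aX aY zX zY addr0.
Qed.

Lemma psi0 : psi (0 : R) = 1.
Proof. by rewrite /psi eqxx. Qed.

Lemma psi_neq0 (s : R) : psi s != 0.
Proof.
rewrite /psi; have [_|s0] := eqVneq s 0; first exact: oner_neq0.
by rewrite mulf_neq0 ?invr_eq0 // subr_eq0 -expR0 (inj_eq (@expR_inj R)).
Qed.

Lemma psiN (s : R) : psi (- s) = expR (- s) * psi s.
Proof.
rewrite /psi oppr_eq0; have [->|s0] := eqVneq s 0; first by rewrite oppr0 expR0 mulr1.
by rewrite expRN; field; rewrite s0 gt_eqF ?expR_gt0.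
Qed.

Lemma zeroVE : (0, 0) = 0 :> Vt R m. Proof. by []. Qed.

Lemma addVE p q : addV p q = p + q. Proof. by []. Qed.

Lemma scaleVE k p : scaleV k p = k *: p. Proof. by []. Qed.

Lemma gmulA g g' g'' : gmul g (gmul g' g'') = gmul (gmul g g') g''.
Proof.
case: g g' g'' => t [v y] [t' [v' y']] [t'' [v'' y'']].
rewrite /gmul !addVE !scaleVE; congr (_, (_, _)).
- by rewrite addrA.
- by rewrite mulrDl expRD scalerDr scalerA addrA.
have e_t : expR t = expR (t / 2) * expR (t / 2) by rewrite -expRD -splitr.
rewrite !omegaZr !omegaDr !omegaDl !omegaZl !omegaZr mulrDl !expRD e_t.
move: (omega v v') (omega v v'') (omega v' v'') (expR (t/2)) (expR (t'/2)) (expR t').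
by move=> A B C E1 E2 E3; ring.
Qed.

Lemma gmul1g g : gmul (gone R m) g = g.
Proof.
case: g => t [v y]; rewrite /gmul /gone /= !addVE !scaleVE zeroVE.
by rewrite omega0l !mul0r expR0 !add0r scale1r mul1r addr0.
Qed.

Lemma gmulg1 g : gmul g (gone R m) = g.
Proof.
case: g => t [v y]; rewrite /gmul /gone /= !addVE !scaleVE zeroVE.
by rewrite scaler0 omega0r mul0r mulr0 !addr0.
Qed.

Lemma Exp_oppK Y : gmul (Exp (- Y)) (Exp Y) = gone R m.
Proof.
case: Y => [[a V] x]; rewrite /Exp /gmul /gone /aco /vco /zco /= !addVE !scaleVE zeroVE.
move: (a : R) (x : R) => {}a {}x.
rewrite !mulNr !psiN; congr (_, (_, _)).
- by rewrite addNr.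
- by rewrite scalerN !scalerA addNr.
rewrite -[- V]scaleN1r !omegaZl !omegaZr omegapp !mulr0 mul0r addr0.
ring.
Qed.

End SolvableGroupAN.

Arguments gmul : simpl never.
Arguments Exp : simpl never.

Section Subgroup.

Variables (R : realType) (m : nat) (h : {vspace Lie R m}).
Implicit Types (k g p : Grp R m).

Lemma foldr_gmul_Exp (s : seq (Lie R m)) k :
  foldr (@gmul R m) k (map (@Exp R m) s) =
  gmul (foldr (@gmul R m) (gone R m) (map (@Exp R m) s)) k.
Proof. by elim: s => [|Y s IHs] /=; [rewrite gmul1g | rewrite IHs gmulA]. Qed.

Lemma inH_mul k k' : inH h k -> inH h k' -> inH h (gmul k k').
Proof.
move=> [s [hs ->]] [s' [hs' ->]]; exists (s ++ s').
by rewrite all_cat hs hs' map_cat foldr_cat [RHS]foldr_gmul_Exp.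
Qed.

Lemma inH_Exp Y : Y \in h -> inH h (Exp Y).
Proof. by move=> hY; exists [:: Y]; rewrite /= gmulg1 hY. Qed.

Lemma inH_inv k : inH h k -> exists2 k', inH h k' & gmul k' k = gone R m.
Proof.
move=> [s [+ ->]]; elim: s => [_|Y s IHs /= /andP [hY /IHs [k' hk' k'K]]].
  by exists (gone R m); [exists [::] | rewrite /= gmul1g].
exists (gmul k' (Exp (- Y))); first by apply: inH_mul => //; apply: inH_Exp; rewrite memvN.
by rewrite -gmulA (gmulA (Exp (- Y))) Exp_oppK gmul1g.
Qed.

Lemma orbit_gmul k g p : inH h k ->
  (exists k', inH h k' /\ p = gmul k' g) <-> (exists k', inH h k' /\ p = gmul k' (gmul k g)).
Proof.
move=> hk; have [k' hk' k'K] := inH_inv hk.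
split=> -[k'' [hk'' ->]].
  by exists (gmul k'' k'); split; [exact: inH_mul | rewrite -gmulA (gmulA k') k'K gmul1g].
by exists (gmul k'' k); split; [exact: inH_mul | rewrite gmulA].
Qed.

End Subgroup.

Section Coordinates.

Variables (R : realType) (m : nat).
Implicit Types (X Y : Lie R m) (g p : Grp R m).

Definition coords g : Lie R m := ((g.1 : R^o, g.2.1), g.2.2 : R^o).

Definition Log g : Lie R m :=
  ((g.1 : R^o, (psi (g.1 / 2))^-1 *: g.2.1), g.2.2 / psi g.1 : R^o).

Lemma LogK : cancel Log (@Exp R m).
Proof.
case=> t [v y]; rewrite /Exp /Log /aco /vco /zco /= scaleVE scalerA divff ?psi_neq0 //.
by rewrite scale1r mulrC divfK ?psi_neq0.
Qed.

Lemma fst_gmul_Exp Y g : (gmul (Exp Y) g).1 = aco Y + g.1.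
Proof. by case: g => t [v y]. Qed.

Lemma gmul_Exp_n Y g : aco Y = 0 ->
  gmul (Exp Y) g = (g.1, (vco Y + g.2.1, zco Y + g.2.2 + omega (vco Y) g.2.1 / 2)).
Proof.
case: g => t [v y] aY; rewrite /gmul /Exp aY /= !addVE !scaleVE mul0r psi0 expR0.
by rewrite !scale1r !mul1r add0r.
Qed.

Lemma gmul_Exp_g2alpha Y g : in_g2alpha Y -> gmul (Exp Y) g = (g.1, (g.2.1, zco Y + g.2.2)).
Proof.
case=> aY vY; rewrite gmul_Exp_n // vY zeroVE.
by rewrite add0r omega0l mul0r addr0.
Qed.

Let project :=
  orthogonal_projection (@innerDl R m) (@innerZl R m) (@innerC R m) (@inner_anisotropic R m).

Lemma exists_a_translation (b : {vspace Lie R m}) g : {in b, forall Y, in_a Y} ->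
  exists2 Y, Y \in b & {in b, forall Y', (gmul (Exp Y) g).1 * aco Y' = 0}.
Proof.
move=> Hb; have [u bu perp] := project b (coords g).
exists (- u); rewrite ?memvN // => Y bY.
by move: (perp Y bY); rewrite (inner_a _ (Hb Y bY)) fst_gmul_Exp addrC.
Qed.

Lemma exists_galpha_translation (s : {vspace Lie R m}) g : {in s, forall Y, in_galpha Y} ->
  exists2 Y, Y \in s & {in s, forall Y', dotV (gmul (Exp Y) g).2.1 (vco Y') = 0}.
Proof.
move=> Hs; have [u su perp] := project s (coords g).
have su' : - u \in s by rewrite memvN.
exists (- u) => // Y sY.
by move: (perp Y sY); rewrite (inner_galpha _ (Hs Y sY)) (gmul_Exp_n _ (Hs _ su').1) /= addrC.
Qed.

Lemma exists_g2alpha_translation (z : {vspace Lie R m}) g : {in z, forall Y, in_g2alpha Y} ->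
  exists2 Y, Y \in z & {in z, forall Y', (gmul (Exp Y) g).2.2 * zco Y' = 0}.
Proof.
move=> Hz; have [u zu perp] := project z (coords g).
have zu' : - u \in z by rewrite memvN.
exists (- u) => // Y zY.
by move: (perp Y zY); rewrite (inner_g2alpha _ (Hz Y zY)) (gmul_Exp_g2alpha _ (Hz _ zu')) /= addrC.
Qed.

Lemma Log_orthogonal (b s z : {vspace Lie R m}) p :
  {in b, forall Y, in_a Y} -> {in s, forall Y, in_galpha Y} -> {in z, forall Y, in_g2alpha Y} ->
  {in b, forall Y, p.1 * aco Y = 0} -> {in s, forall Y, dotV p.2.1 (vco Y) = 0} ->
  {in z, forall Y, p.2.2 * zco Y = 0} ->
  {in (b + s + z)%VS, forall Y, inner (Log p) Y = 0}.
Proof.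
move=> Hb Hs Hz pb ps pz _ /memv_addP [_ /memv_addP [Yb bY [Ys sY ->]] [Yz zY ->]].
rewrite !innerDr (inner_a _ (Hb _ bY)) (inner_galpha _ (Hs _ sY)) (inner_g2alpha _ (Hz _ zY)).
rewrite /Log /aco /vco /zco /= dotVZl mulrAC.
by rewrite -/(aco Yb) -/(vco Ys) -/(zco Yz) pb // ps // pz // mulr0 mul0r !addr0.
Qed.

Lemma orbit_normal_form (b s z : {vspace Lie R m}) g :
  {in b, forall Y, in_a Y} -> {in s, forall Y, in_galpha Y} -> {in z, forall Y, in_g2alpha Y} ->
  exists2 k, inH (b + s + z)%VS k & {in (b + s + z)%VS, forall Y, inner (Log (gmul k g)) Y = 0}.
Proof.
move=> Hb Hs Hz.
have [Yb bYb perp_b] := exists_a_translation g Hb.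
have [Ys sYs perp_s] := exists_galpha_translation (gmul (Exp Yb) g) Hs.
have [Yz zYz perp_z] := exists_g2alpha_translation (gmul (Exp Ys) (gmul (Exp Yb) g)) Hz.
exists (gmul (Exp Yz) (gmul (Exp Ys) (Exp Yb))).
  have bs_h : (b + s <= b + s + z)%VS by exact: addvSl.
  apply: inH_mul; [|apply: inH_mul]; apply: inH_Exp.
  - exact: (subvP (addvSr _ _)).
  - exact: (subvP bs_h _ (subvP (addvSr _ _) _ sYs)).
  - exact: (subvP bs_h _ (subvP (addvSl _ _) _ bYb)).
rewrite -!gmulA; apply: Log_orthogonal => // Y HY.
- by rewrite !fst_gmul_Exp (Hz _ zYz).1 (Hs _ sYs).1 !add0r -fst_gmul_Exp perp_b.
- by rewrite (gmul_Exp_g2alpha _ (Hz _ zYz)); exact: perp_s.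
Qed.

End Coordinates.

Theorem lemma3p2 (R : realType) (n : nat) (hn : (0 < n)%N)
  (b c r z : {vspace Lie R n.-1}) :
  (* b subspace of a *)
  (forall X, X \in b -> vco X = (0, 0) /\ zco X = 0) ->
  (* c complex subspace of g_alpha *)
  (forall X, X \in c -> aco X = 0 /\ zco X = 0) ->
  (forall X, X \in c -> Jmap X \in c) ->
  (* r totally real subspace of g_alpha *)
  (forall X, X \in r -> aco X = 0 /\ zco X = 0) ->
  (forall X Y, X \in r -> Y \in r -> inner (Jmap X) Y = 0) ->
  (* z subspace of g_{2 alpha} *)
  (forall X, X \in z -> aco X = 0 /\ vco X = (0, 0)) ->
  (* the sum is orthogonal *)
  (forall X Y, X \in b -> Y \in c -> inner X Y = 0) ->
  (forall X Y, X \in b -> Y \in r -> inner X Y = 0) ->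
  (forall X Y, X \in b -> Y \in z -> inner X Y = 0) ->
  (forall X Y, X \in c -> Y \in r -> inner X Y = 0) ->
  (forall X Y, X \in c -> Y \in z -> inner X Y = 0) ->
  (forall X Y, X \in r -> Y \in z -> inner X Y = 0) ->
  (* [c, c] subset of z *)
  (forall X Y, X \in c -> Y \in c -> lieb X Y \in z) ->
  let h := (b + c + r + z)%VS in
  (* CH^n identified with AN via g |-> g(o); orbit of g(o) is H g *)
  forall g : Grp R n.-1,
  exists X : Lie R n.-1,
    (forall Y, Y \in h -> inner X Y = 0) /\
    (forall p : Grp R n.-1,
       (exists k, inH h k /\ p = gmul k g) <->
       (exists k, inH h k /\ p = gmul k (Exp X))).
Proof.
move=> Hb Hc _ Hr _ Hz _ _ _ _ _ _ _ h g.
have h_split : h = (b + (c + r) + z)%VS by rewrite /h addvA.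
have [k hk perp] := orbit_normal_form g Hb (in_galpha_addv Hc Hr) Hz.
rewrite -h_split in hk perp.
exists (Log (gmul k g)); split; first exact: perp.
by move=> p; rewrite LogK; exact: orbit_gmul.
Qed.
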